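(* Let $X=\{x_i\}_{i=1}^n\subset\mathbb{R}^d$, $0<\varepsilon<1$, and $T=\{(x-y)/\|x-y\|: x\ne y\in X\}\cup\{0\}$. Suppose $\Pi\in\mathbb{R}^{k\times d}$ has $\varepsilon$-convex hull distortion for $X$. Then $$\forall x,y\in\mathrm{conv}(T):\ |\langle\Pi x,\Pi y\rangle-\langle x,y\rangle|\le 6\varepsilon.$$
   Context: Norms and inner products are Euclidean. $\Pi$ has $\varepsilon$-convex hull distortion for $X$ if $\big|\|\Pi z\|-\|z\|\big|\le\varepsilon$ for all $z\in\mathrm{conv}(\{(x-y)/\|x-y\|: x\ne y\in X\})$. *)

From HB Require Import structures.
From mathcomp Require Import all_boot all_order all_algebra.
Set Implicit Arguments. Unset Strict Implicit. Unset Printing Implicit Defensive.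
Import Order.TTheory GRing.Theory Num.Theory.
Local Open Scope ring_scope.

Definition dotv (R : rcfType) (d : nat) (u v : 'cV[R]_d) : R :=
  \sum_(i < d) u i 0 * v i 0.

Definition normv (R : rcfType) (d : nat) (u : 'cV[R]_d) : R :=
  Num.sqrt (dotv u u).

Definition conv (R : rcfType) (d : nat) (S : 'cV[R]_d -> Prop) (z : 'cV[R]_d) : Prop :=
  exists (m : nat) (p : 'I_m -> 'cV[R]_d) (l : 'I_m -> R),
    (forall i, S (p i)) /\ (forall i, 0 <= l i) /\
    \sum_(i < m) l i = 1 /\ z = \sum_(i < m) l i *: p i.

Definition chords (R : rcfType) (d n : nat) (x : 'I_n -> 'cV[R]_d) (z : 'cV[R]_d) : Prop :=
  exists i j : 'I_n, x i != x j /\ z = (normv (x i - x j))^-1 *: (x i - x j).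

Definition chords0 (R : rcfType) (d n : nat) (x : 'I_n -> 'cV[R]_d) (z : 'cV[R]_d) : Prop :=
  chords x z \/ z = 0.

Definition convex_hull_distortion (R : rcfType) (d n k : nat)
  (Pi : 'M[R]_(k, d)) (x : 'I_n -> 'cV[R]_d) (eps : R) : Prop :=
  forall z, conv (chords x) z -> `| normv (Pi *m z) - normv z | <= eps.

(* Since 0 is the midpoint of a chord c and of -c, conv T is the convex hull of
   the chords (or just {0} when X has no two distinct points), so the
   distortion bound holds on all of conv T.  Points w of conv T have norm at
   most 1, and then | |Pi w| - |w| | <= eps < 1 gives
   | |Pi w|^2 - |w|^2 | <= 3 eps.  Finally conv T is convex and symmetric, so
   w1 = (u + v)/2 and w2 = (u - v)/2 lie in it, and the polarization identity
   <u, v> = |w1|^2 - |w2|^2 (and likewise after applying Pi) yields 6 eps. *)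
From HB Require Import structures.
From mathcomp Require Import all_boot all_order all_algebra.
From mathcomp Require Import ring lra.
Import Order.TTheory GRing.Theory Num.Theory.
Local Open Scope ring_scope.

Section InnerProduct.
Set Implicit Arguments.
Unset Strict Implicit.
Variables (R : rcfType) (d : nat).
Implicit Types (u v w : 'cV[R]_d).

Lemma dotvC u v : dotv u v = dotv v u.
Proof. by apply: eq_bigr => i _; rewrite mulrC. Qed.

Lemma dotvDl u v w : dotv (u + v) w = dotv u w + dotv v w.
Proof. by rewrite /dotv -big_split; apply: eq_bigr => i _; rewrite !mxE mulrDl. Qed.

Lemma dotvZl a u v : dotv (a *: u) v = a * dotv u v.
Proof. by rewrite /dotv mulr_sumr; apply: eq_bigr => i _; rewrite !mxE mulrA. Qed.

Lemma dotvNl u v : dotv (- u) v = - dotv u v.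
Proof. by rewrite -scaleN1r dotvZl mulN1r. Qed.

Lemma dotvBl u v w : dotv (u - v) w = dotv u w - dotv v w.
Proof. by rewrite dotvDl dotvNl. Qed.

Lemma dotvBr u v w : dotv w (u - v) = dotv w u - dotv w v.
Proof. by rewrite dotvC dotvBl !(dotvC w). Qed.

Lemma dotvZr a u v : dotv v (a *: u) = a * dotv v u.
Proof. by rewrite dotvC dotvZl dotvC. Qed.

Lemma dotv_suml m (F : 'I_m -> 'cV[R]_d) v :
  dotv (\sum_(i < m) F i) v = \sum_(i < m) dotv (F i) v.
Proof.
rewrite /dotv exchange_big /=; apply: eq_bigr => i _.
by rewrite summxE mulr_suml.
Qed.

Lemma dotv0l v : dotv 0 v = 0.
Proof. by rewrite -(scale0r 0) dotvZl mul0r. Qed.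

Lemma dotv_polar u v : dotv (u + v) (u - v) = dotv u u - dotv v v.
Proof. by rewrite dotvDl !dotvBr (dotvC v u); ring. Qed.

Lemma dotv_ge0 u : 0 <= dotv u u.
Proof. by apply: sumr_ge0 => i _; rewrite -expr2 sqr_ge0. Qed.

Lemma dotv_eq0 u : dotv u u = 0 -> u = 0.
Proof.
move=> uu0; apply/matrixP => i j; rewrite (ord1 j) mxE.
have : u i 0 * u i 0 = 0.
  by apply: (psumr_eq0P _ uu0) => // k _; rewrite -expr2 sqr_ge0.
by move/eqP; rewrite mulf_eq0 orbb => /eqP.
Qed.

Lemma normv_ge0 u : 0 <= normv u.
Proof. exact: sqrtr_ge0. Qed.

Lemma normv_sqr u : normv u ^+ 2 = dotv u u.
Proof. by rewrite /normv sqr_sqrtr // dotv_ge0. Qed.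

Lemma normvN u : normv (- u) = normv u.
Proof. by rewrite /normv dotvNl dotvC dotvNl opprK. Qed.

Lemma normv_eq0 u : normv u = 0 -> u = 0.
Proof. by move=> u0; apply: dotv_eq0; rewrite -normv_sqr u0 expr0n. Qed.

End InnerProduct.

Section ConvexHull.
Set Implicit Arguments.
Unset Strict Implicit.
Variables (R : rcfType) (d : nat).
Implicit Types (S T : 'cV[R]_d -> Prop) (u v w : 'cV[R]_d).

Lemma conv1 S w : S w -> conv S w.
Proof.
move=> Sw; exists 1%N, (fun _ => w), (fun _ => 1).
by rewrite !big_ord1 scale1r.
Qed.

Lemma conv_convex S a b u v :
  0 <= a -> 0 <= b -> a + b = 1 -> conv S u -> conv S v ->
  conv S (a *: u + b *: v).
Proof.
move=> a0 b0 ab [m1 [p1 [l1 [Sp1 [l1_ge0 [l1_sum ->]]]]]].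
move=> [m2 [p2 [l2 [Sp2 [l2_ge0 [l2_sum ->]]]]]].
pose p i := match @split m1 m2 i with inl k => p1 k | inr k => p2 k end.
pose l i := match @split m1 m2 i with inl k => a * l1 k | inr k => b * l2 k end.
have splitl k : split (lshift m2 k) = inl k := unsplitK (inl k).
have splitr k : split (rshift m1 k) = inr k := unsplitK (inr k).
exists (m1 + m2), p, l; split; [|split; [|split]].
- by move=> i; rewrite /p; case: split.
- by move=> i; rewrite /l; case: split => k; apply: mulr_ge0.
- rewrite big_split_ord /l /=.
  under eq_bigr do rewrite splitl.
  under [X in _ + X]eq_bigr do rewrite splitr.
  by rewrite -!mulr_sumr l1_sum l2_sum !mulr1.
- rewrite big_split_ord /l /p /=.
  under [X in _ = X + _]eq_bigr do rewrite splitl.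
  under [X in _ = _ + X]eq_bigr do rewrite splitr.
  by rewrite !scaler_sumr; congr (_ + _); apply: eq_bigr => i _; rewrite scalerA.
Qed.

Lemma conv_midpoint S u v : conv S u -> conv S v -> conv S (2^-1 *: u + 2^-1 *: v).
Proof. by move=> Su Sv; apply: conv_convex => //; lra. Qed.

Lemma conv_oppr S : (forall w, S w -> S (- w)) -> forall w, conv S w -> conv S (- w).
Proof.
move=> SN w [m [p [l [Sp [l_ge0 [l_sum ->]]]]]].
exists m, (fun i => - p i), l; split; [|split; [|split]] => //.
- by move=> i; apply: SN.
- by rewrite -sumrN; apply: eq_bigr => i _; rewrite scalerN.
Qed.

(* w0 only serves as the witness when all weights vanish. *)
Lemma conv_scaled_sum S T w0 : conv T w0 -> (forall w, S w -> conv T w) ->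
  forall m (p : 'I_m -> 'cV[R]_d) l, (forall i, S (p i)) -> (forall i, 0 <= l i) ->
  exists2 w, conv T w & \sum_(i < m) l i *: p i = (\sum_(i < m) l i) *: w.
Proof.
move=> Tw0 ST; elim=> [|m IH] p l Sp l_ge0.
  by exists w0 => //; rewrite !big_ord0 scale0r.
have [w Tw ew] := IH (fun i => p (widen_ord (leqnSn m) i))
  (fun i => l (widen_ord (leqnSn m) i)) (fun i => Sp _) (fun i => l_ge0 _).
rewrite !big_ord_recr /= ew.
set s := \sum_(i < m) _; set t := l ord_max.
have s_ge0 : 0 <= s by apply: sumr_ge0.
have t_ge0 : 0 <= t := l_ge0 ord_max.
have [st0|st_neq0] := eqVneq (s + t) 0.
  have [-> ->] : s = 0 /\ t = 0 by split; lra.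
  by exists w0 => //; rewrite addr0 !scale0r addr0.
exists ((s / (s + t)) *: w + (t / (s + t)) *: p ord_max).
  apply: conv_convex; rewrite ?divr_ge0 ?addr_ge0 //.
  - by rewrite -mulrDl divff.
  - exact: ST.
by rewrite scalerDr !scalerA !mulrA !(mulrC (s + t)) -!mulrA divff // !mulr1.
Qed.

Lemma conv_trans S T : (forall w, S w -> conv T w) -> forall w, conv S w -> conv T w.
Proof.
move=> ST w [[|m] [p [l [Sp [l_ge0 [l_sum ->]]]]]].
  by move: l_sum; rewrite big_ord0 => /eqP; rewrite eq_sym oner_eq0.
have [w' Tw' ->] := conv_scaled_sum (ST _ (Sp ord0)) ST Sp l_ge0.
by rewrite l_sum scale1r.
Qed.

(* Jensen for |.|^2: 0 <= sum_i l_i |p_i - w|^2 = sum_i l_i |p_i|^2 - |w|^2. *)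
Lemma conv_dotv_le1 S w : (forall u, S u -> dotv u u <= 1) -> conv S w -> dotv w w <= 1.
Proof.
move=> S_le1 [m [p [l [Sp [l_ge0 [l_sum ew]]]]]].
have spread_ge0 : 0 <= \sum_(i < m) l i * dotv (p i - w) (p i - w).
  by apply: sumr_ge0 => i _; rewrite mulr_ge0 ?dotv_ge0.
have mean_dot : \sum_(i < m) l i * dotv (p i) w = dotv w w.
  rewrite [X in _ = dotv X _]ew dotv_suml.
  by apply: eq_bigr => i _; rewrite dotvZl.
have spreadE : \sum_(i < m) l i * dotv (p i - w) (p i - w) =
    \sum_(i < m) l i * dotv (p i) (p i) - dotv w w.
  transitivity (\sum_(i < m) l i * dotv (p i) (p i)
      - (\sum_(i < m) l i * dotv (p i) w) *+ 2 + (\sum_(i < m) l i) * dotv w w).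
    rewrite mulr_suml -sumrMnl -sumrB -big_split /=; apply: eq_bigr => i _.
    by rewrite dotvBl !dotvBr (dotvC w); ring.
  by rewrite mean_dot l_sum mulr2n; ring.
have : \sum_(i < m) l i * dotv (p i) (p i) <= 1.
  rewrite -l_sum; apply: ler_sum => i _.
  by rewrite ler_piMr ?S_le1.
lra.
Qed.

End ConvexHull.

Section Chords.
Set Implicit Arguments.
Unset Strict Implicit.
Variables (R : rcfType) (d n : nat) (x : 'I_n -> 'cV[R]_d).

Lemma chords_dotv z : chords x z -> dotv z z = 1.
Proof.
move=> [i [j [xij ->]]].
have xij_neq0 : normv (x i - x j) != 0.
  by apply: contra xij => /eqP/normv_eq0/eqP; rewrite subr_eq0.
by rewrite dotvZl dotvZr -normv_sqr mulrA -expr2 -exprMn mulVf // expr1n.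
Qed.

Lemma chordsN z : chords x z -> chords x (- z).
Proof.
move=> [i [j [xij ->]]]; exists j, i; split; first by rewrite eq_sym.
by rewrite -scalerN opprB -normvN opprB.
Qed.

Lemma chords0N z : chords0 x z -> chords0 x (- z).
Proof. by case=> [/chordsN|->]; [left | right; rewrite oppr0]. Qed.

Lemma chords0_dotv_le1 z : chords0 x z -> dotv z z <= 1.
Proof. by case=> [/chords_dotv -> // | ->]; rewrite dotv0l ler01. Qed.

Lemma conv_chords0_sub i j : x i != x j ->
  forall w, conv (chords0 x) w -> conv (chords x) w.
Proof.
move=> xij; apply: conv_trans => z [/conv1 // | ->].
set c := (normv (x i - x j))^-1 *: (x i - x j).
have chord_c : chords x c by exists i, j.
have -> : 0 = 2^-1 *: c + 2^-1 *: (- c) by rewrite scalerN addrN.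
by apply: conv_midpoint; apply: conv1 => //; apply: chordsN.
Qed.

Lemma conv_chords0_const : (forall i j, x i = x j) ->
  forall w, conv (chords0 x) w -> w = 0.
Proof.
move=> x_const w [m [p [l [Sp [_ [_ ->]]]]]].
apply: big1 => i _; case: (Sp i) => [[a [b [xab _]]] | ->]; last by rewrite scaler0.
by move: xab; rewrite (x_const a b) eqxx.
Qed.

Lemma conv_chords0 w : conv (chords0 x) w -> conv (chords x) w \/ w = 0.
Proof.
move=> Tw; case: (boolP [exists i, [exists j, x i != x j]]).
  by move=> /existsP[i /existsP[j xij]]; left; apply: conv_chords0_sub xij w Tw.
move=> x_const; right; apply: conv_chords0_const Tw => i j; apply/eqP.
by apply: contraNT x_const => xij; apply/existsP; exists i; apply/existsP; exists j.
Qed.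

End Chords.

Lemma ler_normB_sqr (R : realFieldType) (a b e : R) :
  0 <= a -> 0 <= b -> b <= 1 -> e < 1 -> `|a - b| <= e ->
  `|a ^+ 2 - b ^+ 2| <= 3 * e.
Proof.
move=> a_ge0 b_ge0 b_le1 e_lt1 ab_le.
have -> : a ^+ 2 - b ^+ 2 = (a - b) * (a + b) by ring.
rewrite normrM (ger0_norm (addr_ge0 a_ge0 b_ge0)) mulrC.
have : a - b <= e := le_trans (ler_norm _) ab_le.
by move=> ab; apply: ler_pM; rewrite ?addr_ge0 //; lra.
Qed.

Lemma conv_chords0_distortion (R : rcfType) (d n k : nat) (x : 'I_n -> 'cV[R]_d)
    (eps : R) (Pi : 'M[R]_(k, d)) :
  0 <= eps -> eps < 1 -> convex_hull_distortion Pi x eps ->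
  forall w, conv (chords0 x) w ->
  `| dotv (Pi *m w) (Pi *m w) - dotv w w | <= 3 * eps.
Proof.
move=> eps_ge0 eps_lt1 distortion w Tw.
have [Tw' | ->] := conv_chords0 Tw; last first.
  by rewrite mulmx0 !dotv0l subrr normr0 mulr_ge0.
rewrite -!normv_sqr ler_normB_sqr ?normv_ge0 ?distortion //.
by rewrite /normv -sqrtr1 ler_sqrt // (conv_dotv_le1 (chords0_dotv_le1 (x:=x)) Tw).
Qed.

Theorem lemmaB3 (R : rcfType) (d n k : nat) (x : 'I_n -> 'cV[R]_d) (eps : R)
  (Pi : 'M[R]_(k, d)) :
  0 < eps -> eps < 1 ->
  convex_hull_distortion Pi x eps ->
  forall u v : 'cV[R]_d, conv (chords0 x) u -> conv (chords0 x) v ->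
    `| dotv (Pi *m u) (Pi *m v) - dotv u v | <= 6 * eps.
Proof.
move=> eps_gt0 eps_lt1 distortion u v Tu Tv.
set w1 := 2^-1 *: u + 2^-1 *: v.
set w2 := 2^-1 *: u + 2^-1 *: (- v).
have Tw1 : conv (chords0 x) w1 by apply: conv_midpoint.
have Tw2 : conv (chords0 x) w2.
  by apply: conv_midpoint => //; apply: conv_oppr Tv => z; apply: chords0N.
have [-> ->] : u = w1 + w2 /\ v = w1 - w2.
  by split; apply/matrixP => a b; rewrite !mxE; lra.
rewrite mulmxDr mulmxBr !dotv_polar.
have regroup (a b a' b' : R) : a - b - (a' - b') = (a - a') - (b - b') by ring.
rewrite regroup (le_trans (ler_normB _ _)) //.
have := conv_chords0_distortion (ltW eps_gt0) eps_lt1 distortion Tw1.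
have := conv_chords0_distortion (ltW eps_gt0) eps_lt1 distortion Tw2.
lra.
Qed.
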